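(* For each integer $\omega$, there is a proof labeling scheme $(\mathsf{P},\mathsf{V})$ of size $O(\log n)$ for the class of graphs of locally verifiable treewidth at most $\omega$.
   Context: An elimination tree of a connected graph $G$ is a rooted tree $F$ with $V(F)=V(G)$ such that for every edge $uv$ of $G$, one of $u,v$ is an ancestor of the other in $F$. For $v\in V(F)$ let $F_v$ be the subtree rooted at $v$ and $\mathsf{str}(v)$ the set consisting of $v$ and all strict ancestors of $v$ having a neighbour in $V(F_v)$; the width of $F$ is $\max_v|\mathsf{str}(v)|-1$. An oriented path system $\mathcal{P}$ over $G$ is a set of oriented paths, each obtained by orienting the edges of a path of $G$. The congestion of a vertex $v$ in $\mathcal{P}$ is the number of paths of $\mathcal{P}$ having $v$ as starting vertex or internal vertex (paths ending at $v$ are not counted); the congestion of $\mathcal{P}$ is the maximum over all vertices. $\mathcal{P}$ witnesses an elimination tree $F$ if for every vertex $v$ with parent $\mathsf{p}(v)$ in $F$, either $v\mathsf{p}(v)\in E(G)$ or $\mathcal{P}$ contains a path oriented from $v$ to $\mathsf{p}(v)$. A graph has locally verifiable treewidth at most $k$ if each connected component admits an elimination tree $F$ of width at most $k$ and an oriented path system of congestion at most $k$ witnessing $F$. Proof labeling scheme: vertices have unique identifiers in $\{1,\dots,n\}$; a prover assigns binary labels; the verifier at $v$ sees only $\mathsf{id}(v)$ and $(\mathsf{id}(w),\varphi(w))$ for $w\in N[v]$ and outputs Yes/No; completeness: on graphs of the class, the prover's labels make all vertices output Yes; soundness: on graphs outside the class, every labeling makes some vertex output No; size $O(\log n)$: all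 labels have length $O(\log n)$. *)

From mathcomp Require Import all_boot.
Set Implicit Arguments. Unset Strict Implicit. Unset Printing Implicit Defensive.

Definition simple_graph (T : finType) (e : rel T) : Prop :=
  symmetric e /\ irreflexive e.

Definition prel (T : finType) (p : T -> option T) : rel T :=
  fun x y => p x == Some y.

(* [connect (prel p) u a] : a is an ancestor of u (reflexive).
   [sanc p v a] : a is a strict ancestor of v. *)
Definition sanc (T : finType) (p : T -> option T) (v a : T) : bool :=
  if p v is Some x then connect (prel p) x a else false.

Definition rooted_tree_on (T : finType) (C : {set T}) (r : T)
    (p : T -> option T) : Prop :=
  [/\ r \in C, p r = None,
      (forall v w, v \in C -> p v = Some w -> w \in C)
    & (forall v, v \in C -> connect (prel p) v r)].

Definition elim_tree (T : finType) (e : rel T) (C : {set T}) (r : T)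
    (p : T -> option T) : Prop :=
  rooted_tree_on C r p /\
  (forall u v, u \in C -> v \in C -> e u v ->
     connect (prel p) u v || connect (prel p) v u).

Definition str (T : finType) (e : rel T) (C : {set T}) (p : T -> option T)
    (v : T) : {set T} :=
  v |: [set a | sanc p v a &&
                [exists u, [&& u \in C, connect (prel p) u v & e a u]]].

(* width of F is at most k, i.e. max_v |str v| - 1 <= k *)
Definition width_le (T : finType) (e : rel T) (C : {set T})
    (p : T -> option T) (k : nat) : Prop :=
  forall v, v \in C -> #|str e C p v| <= k.+1.

(* An oriented path (x, s) is the vertex sequence x :: s, a simple path of G
   oriented from its start x to its end [last x s]. *)
Definition opath (T : finType) (e : rel T) (q : T * seq T) : bool :=
  path e q.1 q.2 && uniq (q.1 :: q.2).

(* congestion of v: number of paths with v as starting or internal vertex,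
   i.e. v among all vertices but the last one. *)
Definition congestion (T : finType) (P : seq (T * seq T)) (v : T) : nat :=
  count (fun q => v \in belast q.1 q.2) P.

Definition congestion_le (T : finType) (P : seq (T * seq T)) (k : nat) : Prop :=
  forall v, congestion P v <= k.

Definition witnesses (T : finType) (e : rel T) (C : {set T})
    (p : T -> option T) (P : seq (T * seq T)) : Prop :=
  forall v w, v \in C -> p v = Some w ->
    e v w \/ (exists2 q, q \in P & q.1 = v /\ last q.1 q.2 = w).

Definition lv_treewidth_le (T : finType) (e : rel T) (k : nat) : Prop :=
  forall v0 : T,
    let C := [set u | connect e v0 u] in
    exists (r : T) (p : T -> option T) (P : seq (T * seq T)),
      [/\ elim_tree e C r p, width_le e C p k,
          all (opath e) P, congestion_le P k & witnesses e C p P].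

Definition valid_ids (n : nat) (id : 'I_n -> nat) : Prop :=
  injective id /\ forall v, 0 < id v <= n.

Definition label := seq bool.

(* What v sees: (id w, label w) for all w in N[v], listed by increasing id
   (a canonical ordering depending only on the seen data). *)
Definition view (n : nat) (e : rel 'I_n) (id : 'I_n -> nat)
    (phi : 'I_n -> label) (v : 'I_n) : seq (nat * label) :=
  sort (fun a b : nat * label => a.1 <= b.1)
       [seq (id w, phi w) | w <- enum [set w | (w == v) || e v w]].

Definition log_size_PLS
    (cls : forall n : nat, rel 'I_n -> Prop)
    (V : nat -> seq (nat * label) -> bool) : Prop :=
  exists c : nat,
    (forall (n : nat) (e : rel 'I_n) (id : 'I_n -> nat),
       simple_graph e -> valid_ids id -> cls n e ->
       exists phi : 'I_n -> label,
         (forall v, size (phi v) <= c * (trunc_log 2 n).+1) /\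
         (forall v, V (id v) (view e id phi v) = true)) /\
    (forall (n : nat) (e : rel 'I_n) (id : 'I_n -> nat),
       simple_graph e -> valid_ids id -> ~ cls n e ->
       forall phi : 'I_n -> label,
         exists v, V (id v) (view e id phi v) = false).

From mathcomp Require Import all_boot zify.
From Stdlib Require Import IndefiniteDescription.
Set Implicit Arguments. Unset Strict Implicit. Unset Printing Implicit Defensive.

(* Every vertex v stores, in O(log n) bits, the id of the root of its
   elimination tree, its depth, the id of its parent, the ids of the at most
   omega vertices of [str v :\ v], and one token for each of the at most omega
   witnessing paths that start at v or pass through it.  Locally the verifier
   checks that depths drop by one towards the parent, that the [str] row of a
   child is covered by its parent and the parent's row, that every edge has
   one endpoint in the other's row, and that tokens are handed on hop by hop
   until they reach the parent.  Conversely, when all vertices accept, the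
   parent ids form an elimination tree (depth decreases, and the unique
   depth-0 vertex of a component carries the root id shared by all its
   vertices), [str v] is covered by the row of v because rows propagate
   upwards, and following tokens yields paths whose congestion at w is at
   most the number of tokens stored at w. *)

(** * Self-delimiting binary encoding *)

Fixpoint bits (m x : nat) : seq bool :=
  if m is m'.+1 then odd x :: bits m' x./2 else [::].

Definition nat_of_bits (s : seq bool) : nat :=
  foldr (fun (b : bool) a => b + a.*2) 0 s.

Definition bits_of_nat (x : nat) : seq bool := bits (trunc_log 2 x).+1 x.

Lemma size_bits m x : size (bits m x) = m.
Proof. by elim: m x => //= m IH x; rewrite IH. Qed.

Lemma bitsK m x : x < 2 ^ m -> nat_of_bits (bits m x) = x.
Proof.
elim: m x => [|m IH] x /=; first by rewrite expn0 ltnS leqn0 => /eqP->.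
move=> lt_x; rewrite IH ?odd_double_half // -ltn_double.
rewrite (leq_ltn_trans (leq_addl (odd x) _)) // odd_double_half.
by rewrite -muln2 -expnSr.
Qed.

Lemma bits_of_natK : cancel bits_of_nat nat_of_bits.
Proof. by move=> x; rewrite bitsK // trunc_log_ltn. Qed.

Lemma size_bits_of_nat x n : x <= n -> size (bits_of_nat x) <= (trunc_log 2 n).+1.
Proof. by move=> le_xn; rewrite size_bits ltnS leq_trunc_log. Qed.

(* Blocks are written with every bit doubled and closed by the pair
   [false; true], which no doubled bit can produce. *)
Definition double_bits (s : seq bool) : seq bool := flatten [seq [:: b; b] | b <- s].

Definition join_blocks (ss : seq (seq bool)) : seq bool :=
  flatten [seq double_bits s ++ [:: false; true] | s <- ss].

Fixpoint split_blocks_from (s cur : seq bool) : seq (seq bool) :=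
  match s with
  | b1 :: b2 :: s' =>
      if b1 == b2 then split_blocks_from s' (rcons cur b1)
      else cur :: split_blocks_from s' [::]
  | _ => [::]
  end.

Definition split_blocks (s : seq bool) : seq (seq bool) := split_blocks_from s [::].

Lemma split_blocks_from_cat b rest cur :
  split_blocks_from (double_bits b ++ [:: false; true] ++ rest) cur
  = (cur ++ b) :: split_blocks rest.
Proof.
elim: b cur => [|x b IH] cur /=; first by rewrite cats0.
by rewrite eqxx IH cat_rcons.
Qed.

Lemma join_blocksK : cancel join_blocks split_blocks.
Proof.
elim=> [|b ss IH] //.
by rewrite /join_blocks /= -catA /split_blocks split_blocks_from_cat IH.
Qed.

Lemma size_double_bits s : size (double_bits s) = 2 * size s.
Proof. by elim: s => //= b s; rewrite mulnS => ->. Qed.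

Lemma size_join_blocks ss m : (forall s, s \in ss -> size s <= m) ->
  size (join_blocks ss) <= size ss * (2 * m + 2).
Proof.
elim: ss => [|s ss IH] le_m //=.
rewrite size_cat -/(join_blocks ss) mulSn leq_add //.
  by rewrite size_cat size_double_bits leq_add2r leq_mul2l le_m ?mem_head.
by apply: IH => t ss_t; rewrite le_m // inE ss_t orbT.
Qed.

Definition encode_seq (A : Type) (f : A -> seq bool) (xs : seq A) : seq bool :=
  join_blocks (map f xs).

Definition decode_seq (A : Type) (g : seq bool -> A) (s : seq bool) : seq A :=
  map g (split_blocks s).

Lemma encode_seqK (A : Type) (f : A -> seq bool) g :
  cancel f g -> cancel (encode_seq f) (decode_seq g).
Proof. by move=> fK xs; rewrite /decode_seq join_blocksK -map_comp (eq_map fK) map_id. Qed.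

Lemma size_encode_seq (A : eqType) (f : A -> seq bool) (xs : seq A) m :
  (forall x, x \in xs -> size (f x) <= m) -> size (encode_seq f xs) <= size xs * (2 * m + 2).
Proof.
move=> le_m; rewrite -(size_map f); apply: size_join_blocks.
by move=> s /mapP[x xs_x ->]; apply: le_m.
Qed.

Definition table := seq (seq nat).
Definition encode_table : table -> seq bool := encode_seq (encode_seq bits_of_nat).
Definition decode_table : seq bool -> table := decode_seq (decode_seq nat_of_bits).

Lemma encode_tableK : cancel encode_table decode_table.
Proof. exact/encode_seqK/encode_seqK/bits_of_natK. Qed.

Lemma size_encode_table (L : table) n k K :
  size L <= K -> (forall l, l \in L -> size l <= k) ->
  (forall l x, l \in L -> x \in l -> x <= n) ->
  size (encode_table L) <= K * (8 * k + 2) * (trunc_log 2 n).+1.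
Proof.
move=> le_K le_k le_n; set B := (trunc_log 2 n).+1.
have row_size l : l \in L -> size (encode_seq bits_of_nat l) <= k * (2 * B + 2).
  move=> L_l; apply: leq_trans (size_encode_seq (m := B) _) _.
    by move=> x l_x; apply/size_bits_of_nat/le_n/l_x.
  by rewrite leq_mul2r le_k ?orbT.
apply: leq_trans (size_encode_seq row_size) _; rewrite -mulnA leq_mul //.
have : 0 < B by []; nia.
Qed.

(** * Labels and the verifier *)

(* A label is a table: a header row [root id; depth; parent id; 1 if the
   parent is adjacent], the row of ids of [str v :\ v], then routing tokens. *)
Definition mk_label (root depth parent adjacent : nat) (D : seq nat) (toks : table) : table :=
  [:: [:: root; depth; parent; adjacent], D & toks].

Definition lroot (L : table) := nth 0 (nth [::] L 0) 0.
Definition ldepth (L : table) := nth 0 (nth [::] L 0) 1.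
Definition lparent (L : table) := nth 0 (nth [::] L 0) 2.
Definition ladjacent (L : table) := nth 0 (nth [::] L 0) 3.
Definition lstr (L : table) := nth [::] L 1.
Definition ltokens (L : table) := drop 2 L.

(* A token placed on a non-final vertex u of the path routed from [src] to
   its parent [dst]: [next] is the successor of u on the path, [hops] the
   number of edges still to go, and [depth], [D] repeat the depth and str
   row of [src], to be checked against the label of [dst]. *)
Definition mk_token (src dst next hops depth : nat) (D : seq nat) : seq nat :=
  [:: src, dst, next, hops, depth & D].

Definition tsrc (t : seq nat) := nth 0 t 0.
Definition tdst (t : seq nat) := nth 0 t 1.
Definition tnext (t : seq nat) := nth 0 t 2.
Definition thops (t : seq nat) := nth 0 t 3.
Definition tdepth (t : seq nat) := nth 0 t 4.
Definition tstr (t : seq nat) := drop 5 t.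

Definition decoded (a : nat * label) : table := decode_table a.2.

Definition parent_ok (depth : nat) (D : seq nat) (pid : nat) (L : table) : bool :=
  ((ldepth L).+1 == depth) && all (fun a => (a == pid) || (a \in lstr L)) D.

Definition same_route (t t' : seq nat) : bool :=
  [&& tsrc t' == tsrc t, tdst t' == tdst t, tdepth t' == tdepth t & tstr t' == tstr t].

Definition token_ok (x : nat) (s : seq (nat * label)) (t : seq nat) : bool :=
  (0 < thops t) && has (fun a => [&& a.1 == tnext t, a.1 != x &
     if thops t == 1 then (a.1 == tdst t) && parent_ok (tdepth t) (tstr t) a.1 (decoded a)
     else has (fun t' => same_route t t' && (thops t' == (thops t).-1))
              (ltokens (decoded a))]) s.

Definition parent_link_ok (x : nat) (L : table) (s : seq (nat * label)) : bool :=
  if ladjacent L == 1 then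
    has (fun a => [&& a.1 == lparent L, a.1 != x & parent_ok (ldepth L) (lstr L) a.1 (decoded a)]) s
  else
    has (fun t => [&& tsrc t == x, tdst t == lparent L, tdepth t == ldepth L & tstr t == lstr L])
        (ltokens L).

Definition label_ok (omega x : nat) (L : table) (s : seq (nat * label)) : bool :=
  [&& all (fun a => lroot (decoded a) == lroot L) s,
      (ldepth L == 0) ==> ((x == lroot L) && (lstr L == [::])),
      size (lstr L) <= omega, size (ltokens L) <= omega,
      all (fun a => [|| a.1 == x, a.1 \in lstr L | x \in lstr (decoded a)]) s,
      (ldepth L == 0) || parent_link_ok x L s
    & all (token_ok x s) (ltokens L)].

Definition lvtw_verifier (omega : nat) (x : nat) (s : seq (nat * label)) : bool :=
  has (fun a => (a.1 == x) && label_ok omega x (decoded a) s) s.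

Lemma mem_view n (e : rel 'I_n) id phi u a :
  a \in view e id phi u -> exists2 w, (w == u) || e u w & a = (id w, phi w).
Proof. by rewrite /view mem_sort => /mapP[w]; rewrite mem_enum inE; exists w. Qed.

Lemma view_mem n (e : rel 'I_n) id phi u w :
  (w == u) || e u w -> (id w, phi w) \in view e id phi u.
Proof. by move=> N_w; rewrite /view mem_sort map_f // mem_enum inE. Qed.

Lemma card_preim_seq (T : finType) (f : T -> nat) (s : seq nat) :
  injective f -> #|[set a | f a \in s]| <= size s.
Proof.
move=> f_inj; rewrite cardE -(size_map f); apply: uniq_leq_size.
  by rewrite map_inj_uniq // enum_uniq.
by move=> x /mapP[a]; rewrite mem_enum inE => s_fa ->.
Qed.

Lemma mem_belast_neq_last (T : eqType) (x y : T) s :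
  y \in x :: s -> y != last x s -> y \in belast x s.
Proof. by rewrite lastI mem_rcons inE => /orP[/eqP->|//]; rewrite eqxx. Qed.

Lemma belast_neq_last (T : eqType) (x y : T) s : uniq (x :: s) ->
  y \in belast x s -> y != last x s.
Proof.
rewrite lastI rcons_uniq => /andP[last_notin _].
by apply: contraTneq => ->.
Qed.

Lemma index_belast (T : eqType) (x u : T) s : uniq (x :: s) ->
  u \in belast x s -> index u (x :: s) < size s.
Proof.
move=> uniq_s u_in; have u_last := belast_neq_last uniq_s u_in; move/mem_belast: u_in => u_in.
have : index u (x :: s) < size (x :: s) by rewrite index_mem.
rewrite ltnS leq_eqVlt => /orP[/eqP E | //]; move: u_last.
by rewrite -(nth_index x u_in) E -[size s]/((size (x :: s)).-1) nth_last eqxx.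
Qed.

Lemma nth_belast (T : eqType) (x y : T) s j : uniq (x :: s) -> j < size s ->
  nth y (x :: s) j \in belast x s.
Proof.
move=> uniq_s lt_j; apply: mem_belast_neq_last; first by rewrite mem_nth // ltnW.
have -> : last x s = nth y (x :: s) (size s) by rewrite -[last x s]/(last y (x :: s)) -nth_last.
by rewrite nth_uniq //= ?ltnS ?(ltnW lt_j) // neq_ltn lt_j.
Qed.

(** * Parent functions *)

Section ParentFunction.
Variables (T : finType) (p : T -> option T).

Lemma connect_prel_step x y : connect (prel p) x y ->
  x = y \/ exists2 z, p x = Some z & connect (prel p) z y.
Proof.
move=> /connectP[[|z s] /= ps ->]; first by left.
by move: ps => /andP[/eqP p_x ps]; right; exists z => //; apply/connectP; exists s.
Qed.

Lemma sanc_connect x y : sanc p x y -> connect (prel p) x y.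
Proof.
rewrite /sanc; case p_x: (p x) => [z|//] /(connect_trans _); apply.
by apply: connect1; rewrite /prel p_x.
Qed.

Lemma sanc_parent x z a : p x = Some z -> sanc p x a = (a == z) || sanc p z a.
Proof.
move=> p_x; rewrite {1}/sanc p_x; apply/idP/idP.
  case/connect_prel_step => [->|[z' p_z c]]; first by rewrite eqxx.
  by rewrite /sanc p_z c orbT.
by case/orP => [/eqP ->|/sanc_connect].
Qed.

Lemma ancestor_mem_str (e : rel T) (C : {set T}) u a : u \in C -> a != u ->
  connect (prel p) u a -> e a u -> a \in str e C p u :\ u.
Proof.
move=> C_u a_u /connect_prel_step[E | [z p_u c_za]] e_au; first by rewrite E eqxx in a_u.
rewrite /str !inE a_u (negbTE a_u) /sanc p_u c_za /=; apply/existsP; exists u.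
by rewrite C_u connect0 e_au.
Qed.

Variable f : T -> nat.
Hypothesis f_parent : forall x y, p x = Some y -> f y < f x.

Lemma connect_prel_mono x y : connect (prel p) x y -> f y <= f x.
Proof.
move=> /connectP[s ps ->]; elim: s x ps => //= z s IH x /andP[/eqP p_x ps].
exact: leq_trans (IH _ ps) (ltnW (f_parent p_x)).
Qed.

Lemma sanc_mono x y : sanc p x y -> f y < f x.
Proof.
rewrite /sanc; case p_x: (p x) => [z|//] /connect_prel_mono.
by move/leq_ltn_trans; apply; apply: f_parent.
Qed.

End ParentFunction.

Section RootedTree.
Variables (T : finType) (C : {set T}) (r : T) (p : T -> option T).
Hypothesis tree : rooted_tree_on C r p.

Lemma sanc_root a : sanc p r a = false.
Proof. by case: tree => _ p_r _ _; rewrite /sanc p_r. Qed.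

Lemma sanc_irr x : x \in C -> ~~ sanc p x x.
Proof.
case: tree => _ p_r _ to_r C_x; apply/negP; rewrite /sanc.
case p_x: (p x) => [x1|//] c1.
have back y : connect (prel p) x y -> connect (prel p) y x.
  move=> /connectP[s ps ->]; elim/last_ind: s ps => [|s z IH] //=.
  rewrite rcons_path last_rcons => /andP[ps /eqP p_z].
  case: (connect_prel_step (IH ps)) => [E|[z' p_z' c]].
    by move: p_z; rewrite E p_x => -[<-].
  by move: p_z; rewrite p_z' => -[<-].
case: (connect_prel_step (back _ (to_r _ C_x))) => [E|[z' p_z' _]].
  by move: p_x; rewrite -E p_r.
by rewrite p_r in p_z'.
Qed.

Definition tree_depth x := #|[set a | sanc p x a]|.

Lemma tree_depth_None x : p x = None -> tree_depth x = 0.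
Proof.
by move=> p_x; apply/eqP; rewrite cards_eq0; apply/eqP/setP => a; rewrite !inE /sanc p_x.
Qed.

Lemma tree_depth_parent x z : x \in C -> p x = Some z -> tree_depth x = (tree_depth z).+1.
Proof.
move=> C_x p_x; have C_z : z \in C by case: tree => _ _ /(_ x z C_x p_x).
rewrite /tree_depth (_ : [set a | sanc p x a] = z |: [set a | sanc p z a]).
  by rewrite cardsU1 inE (negbTE (sanc_irr C_z)).
by apply/setP => a; rewrite !inE (sanc_parent a p_x).
Qed.

Lemma tree_depth0 x : x \in C -> tree_depth x = 0 -> x = r.
Proof.
move=> C_x; case p_x: (p x) => [z|].
  move=> /eqP; rewrite cards_eq0 => /eqP/setP/(_ z).
  by rewrite !inE (sanc_parent z p_x) eqxx.
by case: tree => _ _ _ /(_ x C_x) /connect_prel_step [//|[z]]; rewrite p_x.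
Qed.

Lemma mem_str_parent (e : rel T) u w a : u \in C ->
  p u = Some w -> a \in str e C p u :\ u -> (a == w) || (a \in str e C p w :\ w).
Proof.
move=> C_u p_u; rewrite /str !inE => /andP[a_u /orP[/eqP a_u' | /andP[anc_a F_a]]].
  by rewrite a_u' eqxx in a_u.
move: anc_a; rewrite (sanc_parent a p_u) => /orP[-> // | anc_a].
have C_w : w \in C by case: tree => _ _ /(_ u w C_u p_u).
have a_w : a != w by apply: contraNneq _ (sanc_irr C_w) => a_w; rewrite -{2}a_w.
rewrite (negbTE a_w) anc_a /=; case/existsP: F_a => x /and3P[C_x c_xu e_ax].
apply/existsP; exists x; rewrite C_x e_ax andbT.
by apply: connect_trans c_xu _; apply: connect1; rewrite /prel p_u.
Qed.

End RootedTree.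

Lemma valid_ids_inj n (id : 'I_n -> nat) : valid_ids id -> injective id.
Proof. by case. Qed.

Lemma simple_graph_sym (T : finType) (e : rel T) : simple_graph e -> symmetric e.
Proof. by case. Qed.

Lemma simple_graph_neq (T : finType) (e : rel T) u w : simple_graph e -> e u w -> u != w.
Proof. by case=> _ e_irr; apply: contraTneq => ->; rewrite e_irr. Qed.

Lemma adj_id_neq (T : finType) (e : rel T) (id : T -> nat) u w :
  simple_graph e -> injective id -> e u w -> id w != id u.
Proof. by move=> e_simple id_inj /(simple_graph_neq e_simple); rewrite eq_sym (inj_eq id_inj). Qed.

(** * Soundness *)

Section Soundness.
Variables (omega n : nat) (e : rel 'I_n) (id : 'I_n -> nat) (phi : 'I_n -> label).
Hypotheses (e_simple : simple_graph e) (id_valid : valid_ids id)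
  (accepted : forall v, lvtw_verifier omega (id v) (view e id phi v)).
Local Notation T := 'I_n.
Local Notation L u := (decode_table (phi u)).

Let id_inj : injective id := valid_ids_inj id_valid.
Let e_sym : symmetric e := simple_graph_sym e_simple.

Lemma label_accepted u : label_ok omega (id u) (L u) (view e id phi u).
Proof.
have /hasP[a /mem_view[w N_w ->] /andP[/eqP /id_inj E ok_w]] := accepted u.
by move: ok_w; rewrite /= E.
Qed.

Lemma lroot_adj u w : e u w -> lroot (L w) = lroot (L u).
Proof.
move=> euw; have /and5P[/allP same_root _ _ _ _] := label_accepted u.
by apply/eqP/(same_root (id w, phi w))/view_mem; rewrite euw orbT.
Qed.

Lemma ldepth0 u : ldepth (L u) = 0 -> id u = lroot (L u) /\ lstr (L u) = [::].
Proof.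
have /and5P[_ root_ok _ _ _] := label_accepted u.
by move=> d0; move: root_ok; rewrite d0 eqxx => /andP[/eqP-> /eqP->].
Qed.

Lemma size_lstr u : size (lstr (L u)) <= omega.
Proof. by have /and5P[_ _ -> _ _] := label_accepted u. Qed.

Lemma size_ltokens u : size (ltokens (L u)) <= omega.
Proof. by have /and5P[_ _ _ -> _] := label_accepted u. Qed.

Lemma adj_lstr u w : e u w -> id w \in lstr (L u) \/ id u \in lstr (L w).
Proof.
move=> euw; have /and5P[_ _ _ _ /and3P[/allP edge_ok _ _]] := label_accepted u.
have /edge_ok := view_mem id phi (introT orP (or_intror euw)).
by rewrite /= (negbTE (adj_id_neq e_simple id_inj euw)) /= => /orP[]; [left | right].
Qed.

Lemma parent_link u : ldepth (L u) != 0 -> parent_link_ok (id u) (L u) (view e id phi u).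
Proof.
move=> d_u; have /and5P[_ _ _ _ /and3P[_ ok _]] := label_accepted u.
by rewrite (negbTE d_u) in ok.
Qed.

Lemma adjacent_parent u : ldepth (L u) != 0 -> ladjacent (L u) == 1 ->
  exists w, [/\ e u w, id w = lparent (L u) & parent_ok (ldepth (L u)) (lstr (L u)) (id w) (L w)].
Proof.
move=> /parent_link ok adj; move: ok; rewrite /parent_link_ok adj.
move=> /hasP[a /mem_view[w N_w ->]].
move=> /and3P[/eqP pid_w ne_w ok_w]; exists w; split => //.
by case/orP: N_w ne_w => [/eqP-> | //]; rewrite eqxx.
Qed.

Lemma routed_parent u : ldepth (L u) != 0 -> ladjacent (L u) != 1 ->
  exists2 t, t \in ltokens (L u) &
    [/\ tsrc t = id u, tdst t = lparent (L u), tdepth t = ldepth (L u) & tstr t = lstr (L u)].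
Proof.
move=> /parent_link ok /negbTE adj; move: ok; rewrite /parent_link_ok adj.
move=> /hasP[t tok_t].
by case/and4P => /eqP ? /eqP ? /eqP ? /eqP ?; exists t.
Qed.

Lemma token_forward u t : t \in ltokens (L u) ->
  0 < thops t /\ exists w, [/\ e u w, id w = tnext t &
  if thops t == 1 then id w = tdst t /\ parent_ok (tdepth t) (tstr t) (id w) (L w)
  else exists2 t', t' \in ltokens (L w) & same_route t t' /\ thops t' = (thops t).-1].
Proof.
move=> tok_t; have /and5P[_ _ _ _ /and3P[_ _ /allP tokens_ok]] := label_accepted u.
have /andP[hops_gt0 /hasP[a /mem_view[w N_w ->]]] := tokens_ok t tok_t.
case/and3P=> /eqP next_w ne_w ok_w.
split => //; exists w; split => //.
  by case/orP: N_w ne_w => [/eqP-> | //]; rewrite eqxx.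
case: ifP ok_w => _ /=; first by case/andP => /eqP.
by case/hasP => t' tok_t' /andP[? /eqP ?]; exists t'.
Qed.

Lemma token_walk h u t : t \in ltokens (L u) -> thops t = h -> exists s, [/\ path e u s,
  id (last u s) = tdst t, parent_ok (tdepth t) (tstr t) (id (last u s)) (L (last u s)) &
  all (fun y => has (fun t' => tsrc t' == tsrc t) (ltokens (L y))) (belast u s)].
Proof.
elim: h u t => [|k IH] u t tok_t hops_t; first by have [] := token_forward tok_t; rewrite hops_t.
have [_ [w [euw _]]] := token_forward tok_t; rewrite hops_t.
case: k IH hops_t => [|k] IH hops_t /=.
  move=> [dst_w ok_w]; exists [:: w]; split; rewrite //= ?euw //.
  by rewrite andbT; apply/hasP; exists t; rewrite ?eqxx.
move=> [t' tok_t' [/and4P[/eqP src' /eqP dst' /eqP depth' /eqP str'] hops']].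
have [s [ps last_s ok_s tokens_s]] := IH w t' tok_t' hops'.
exists (w :: s); split; rewrite //= ?euw ?ps -?dst' -?depth' -?str' //.
by rewrite -src' tokens_s andbT; apply/hasP; exists t; rewrite ?src' ?eqxx.
Qed.

Definition needs_route v := (ldepth (L v) != 0) && (ladjacent (L v) != 1).

Definition route v s := [&& path e v s, uniq (v :: s), id (last v s) == lparent (L v),
  parent_ok (ldepth (L v)) (lstr (L v)) (id (last v s)) (L (last v s)) &
  all (fun y => has (fun t => tsrc t == id v) (ltokens (L y))) (belast v s)].

(* The walk read off the tokens may revisit vertices; [shorten] makes it a path
   with the same ends whose vertices still carry tokens of source v. *)
Lemma exists_route v : exists s, needs_route v ==> route v s.
Proof.
case needs_v: (needs_route v); last by exists [::].
move: needs_v => /andP[d_v adj_v].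
have [t tok_t [src_t dst_t depth_t str_t]] := routed_parent d_v adj_v.
have [s [ps last_s ok_s tokens_s]] := token_walk tok_t erefl.
have [ps' uniq_s' sub_s' last_s'] :
    [/\ path e v (shorten v s), uniq (v :: shorten v s), {subset shorten v s <= s}
      & last v (shorten v s) = last v s] by case: (shortenP ps).
exists (shorten v s); rewrite /route ps' uniq_s' last_s' -dst_t -depth_t -str_t ok_s last_s eqxx /=.
apply/allP => y y_in; have := belast_neq_last uniq_s' y_in; move/mem_belast: y_in => y_in.
rewrite last_s' => y_ne.
have : y \in v :: s by move: y_in; rewrite !inE => /orP[->|/sub_s' ->]; rewrite ?orbT.
by move=> /mem_belast_neq_last /(_ y_ne) /(allP tokens_s); rewrite src_t.
Qed.

Definition route_of v := xchoose (exists_route v).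

Lemma route_ofP v : needs_route v -> route v (route_of v).
Proof. exact/implyP/(xchooseP (exists_route v)). Qed.

Definition parent u : option T :=
  if ldepth (L u) == 0 then None else [pick w | id w == lparent (L u)].

Lemma parentP u : ldepth (L u) != 0 -> exists w, [/\ parent u = Some w, id w = lparent (L u),
  parent_ok (ldepth (L u)) (lstr (L u)) (id w) (L w), connect e u w
  & (ladjacent (L u) == 1 -> e u w)].
Proof.
move=> d_u.
suff [w [pid_w ok_w cuw adj_w]] : exists w, [/\ id w = lparent (L u),
    parent_ok (ldepth (L u)) (lstr (L u)) (id w) (L w), connect e u w
    & (ladjacent (L u) == 1 -> e u w)].
  exists w; split => //; rewrite /parent (negbTE d_u).
  case: pickP => [w' /eqP pid_w'|/(_ w)]; last by rewrite pid_w eqxx.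
  by rewrite (id_inj (etrans pid_w' (esym pid_w))).
case adj: (ladjacent (L u) == 1).
  by have [w [euw pid_w ok_w]] := adjacent_parent d_u adj; exists w; split => //; apply: connect1.
have /and5P[ps _ /eqP last_pid ok_last _] := route_ofP (introT andP (conj d_u (negbT adj))).
by exists (last u (route_of u)); split => //; apply/connectP; exists (route_of u).
Qed.

Lemma parent_someP u w : parent u = Some w -> [/\ id w = lparent (L u),
  parent_ok (ldepth (L u)) (lstr (L u)) (id w) (L w), connect e u w
  & (ladjacent (L u) == 1 -> e u w)].
Proof.
move=> p_u; have d_u : ldepth (L u) != 0 by move: p_u; rewrite /parent; case: eqP.
by have [w' [p_u' ? ? ? ?]] := parentP d_u; move: p_u; rewrite p_u' => -[<-].
Qed.

Lemma parent_ldepth u w : parent u = Some w -> ldepth (L w) < ldepth (L u).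
Proof. by case/parent_someP => _ /andP[/eqP <- _]. Qed.

Lemma lstr_sanc u a : a \in lstr (L u) -> exists2 w, id w = a & sanc parent u w.
Proof.
elim: {u}(ldepth (L u)).+1 {-2}u (ltnSn (ldepth (L u))) => // k IH u lt_k str_a.
case d_u: (ldepth (L u) == 0); first by move: str_a; have [_ ->] := ldepth0 (eqP d_u).
have [w [p_u _ /andP[_ /allP str_w] _ _]] := parentP (negbT d_u).
case/orP: (str_w a str_a) => [/eqP-> | /IH[]]; first by exists w => //; rewrite /sanc p_u connect0.
  by move: (parent_ldepth p_u) lt_k; lia.
by move=> z id_z anc_z; exists z; rewrite // /sanc p_u sanc_connect.
Qed.

Lemma lroot_connect u w : connect e u w -> lroot (L w) = lroot (L u).
Proof.
move=> /connectP[s ps ->]; elim: s u ps => //= z s IH u /andP[euz ps].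
by rewrite IH // (lroot_adj euz).
Qed.

Lemma connect_depth0 u : exists z, [/\ connect (prel parent) u z, ldepth (L z) = 0 & connect e u z].
Proof.
elim: {u}(ldepth (L u)).+1 {-2}u (ltnSn (ldepth (L u))) => // k IH u lt_k.
case d_u: (ldepth (L u) == 0); first by exists u; rewrite (eqP d_u).
have [w [p_u _ _ cuw _]] := parentP (negbT d_u).
have [|z [cwz d_z cwz']] := IH w; first by move: (parent_ldepth p_u) lt_k; lia.
exists z; split => //; last exact: connect_trans cwz'.
by apply: connect_trans cwz; apply: connect1; rewrite /prel p_u.
Qed.

Lemma lstr_up u v a : connect (prel parent) u v -> id a \in lstr (L u) ->
  ldepth (L a) < ldepth (L v) -> id a \in lstr (L v).
Proof.
move=> /connectP[s ps ->]; elim: s u ps => //= z s IH u /andP[/eqP p_u ps] str_a lt_a.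
apply: IH => //; have [_ /andP[_ /allP str_z] _ _] := parent_someP p_u.
case/orP: (str_z _ str_a) => // /eqP /id_inj a_z; subst a.
have /(connect_prel_mono parent_ldepth) : connect (prel parent) z (last z s).
  by apply/connectP; exists s.
by move: lt_a; lia.
Qed.

Lemma parent_elim_tree v0 r : connect e v0 r -> ldepth (L r) = 0 ->
  elim_tree e [set u | connect e v0 u] r parent.
Proof.
move=> c_r d_r; have to_r u : connect e v0 u -> connect (prel parent) u r.
  move=> c_u; have [z [cz d_z c_z]] := connect_depth0 u.
  suff -> : r = z by [].
  apply: id_inj; rewrite (ldepth0 d_z).1 (ldepth0 d_r).1.
  by rewrite (lroot_connect c_z) (lroot_connect c_u) (lroot_connect c_r).
split; first split.
- by rewrite inE.
- by rewrite /parent d_r eqxx.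
- move=> v w; rewrite !inE => c_v p_v.
  by have [_ _ c_w _] := parent_someP p_v; apply: connect_trans c_w.
- by move=> u; rewrite inE; apply: to_r.
- move=> u v _ _ euv.
  by case: (adj_lstr euv) => /lstr_sanc[w /id_inj <- /sanc_connect ->]; rewrite ?orbT.
Qed.

Lemma str_parent_sub C v : str e C parent v \subset v |: [set a | id a \in lstr (L v)].
Proof.
apply/subsetP => a; rewrite /str !inE => /orP[-> // | /andP[anc_a /existsP[u /and3P[_ c_uv eau]]]].
apply/orP; right; have lt_av := sanc_mono parent_ldepth anc_a.
have eua : e u a by rewrite e_sym.
case: (adj_lstr eua) => str_a; first exact: lstr_up c_uv str_a lt_av.
have [w /id_inj w_u anc_w] := lstr_sanc str_a; subst w.
have := sanc_mono parent_ldepth anc_w; have := connect_prel_mono parent_ldepth c_uv; lia.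
Qed.

Lemma parent_width C : width_le e C parent omega.
Proof.
move=> v _; apply: leq_trans (subset_leq_card (str_parent_sub C v)) _.
rewrite cardsU1; have := card_preim_seq (lstr (L v)) id_inj; have := size_lstr v.
by case: (_ \notin _); lia.
Qed.

Definition routes := [seq (v, route_of v) | v <- enum needs_route].

Lemma routes_opath : all (opath e) routes.
Proof.
apply/allP => q /mapP[v]; rewrite mem_enum => needs_v ->.
by have /and5P[? ? _ _ _] := route_ofP needs_v; apply/andP.
Qed.

(* A route through w leaves a token of its source on w, and the sources of
   distinct routes are distinct. *)
Lemma routes_congestion : congestion_le routes omega.
Proof.
move=> w; rewrite /congestion count_map -size_filter.
set S := filter _ (enum needs_route).
have uniq_S : uniq (map id S) by rewrite (map_inj_uniq id_inj) filter_uniq // enum_uniq.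
apply: leq_trans (size_ltokens w); rewrite -(size_map id S) -(size_map tsrc (ltokens (L w))).
apply: uniq_leq_size => // x /mapP[v]; rewrite mem_filter mem_enum => /andP[w_in needs_v] ->.
have /and5P[_ _ _ _ /allP tokens_v] := route_ofP needs_v.
by have /hasP[t tok_t /eqP <-] := tokens_v w w_in; apply: map_f.
Qed.

Lemma routes_witness C : witnesses e C parent routes.
Proof.
move=> v w _ p_v; have [pid_w _ _ adj_w] := parent_someP p_v.
case adj: (ladjacent (L v) == 1); first by left; apply: adj_w.
have d_v : ldepth (L v) != 0 by move: p_v; rewrite /parent; case: eqP.
have needs_v : needs_route v by rewrite /needs_route d_v adj.
right; exists (v, route_of v); first by apply: map_f; rewrite mem_enum.
split => //=; have /and5P[_ _ /eqP last_pid _ _] := route_ofP needs_v.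
by apply: id_inj; rewrite last_pid pid_w.
Qed.

Theorem lvtw_sound : lv_treewidth_le e omega.
Proof.
move=> v0 C; have [r [_ d_r c_r]] := connect_depth0 v0.
exists r, parent, routes; split.
- exact: parent_elim_tree.
- exact: parent_width.
- exact: routes_opath.
- exact: routes_congestion.
- exact: routes_witness.
Qed.

End Soundness.

(** * Completeness *)

Section Completeness.
Variables (omega n : nat) (e : rel 'I_n) (id : 'I_n -> nat).
Hypotheses (e_simple : simple_graph e) (id_valid : valid_ids id) (lvtw : lv_treewidth_le e omega).
Local Notation T := 'I_n.

Let id_inj : injective id := valid_ids_inj id_valid.
Let e_sym : symmetric e := simple_graph_sym e_simple.

Definition component (u : T) := [set x | connect e u x].

Definition certifies v0 (c : T * (T -> option T) * seq (T * seq T)) :=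
  [/\ elim_tree e (component v0) c.1.1 c.1.2, width_le e (component v0) c.1.2 omega,
      all (opath e) c.2, congestion_le c.2 omega & witnesses e (component v0) c.1.2 c.2].

Lemma exists_certificate v0 : exists c, certifies v0 c.
Proof. by have [r [p [P [? ? ? ? ?]]]] := lvtw v0; exists (r, p, P). Qed.

Definition certificate v0 :=
  proj1_sig (constructive_indefinite_description _ (exists_certificate v0)).

Lemma certificateP v0 : certifies v0 (certificate v0).
Proof. exact: proj2_sig (constructive_indefinite_description _ (exists_certificate v0)). Qed.

(* Every vertex uses the certificate chosen for a canonical representative
   of its component, so that neighbours agree on it. *)
Definition rep (u : T) := odflt u [pick x | connect e u x].

Lemma connect_sym_eq u w : connect e u w -> connect e u =1 connect e w.
Proof.
move=> c_uw x; apply/idP/idP; last exact: connect_trans.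
by apply: connect_trans; rewrite (sym_connect_sym e_sym).
Qed.

Lemma component_connect u w : connect e u w -> component w = component u.
Proof. by move=> c_uw; apply/setP => x; rewrite !inE (connect_sym_eq c_uw). Qed.

Lemma rep_connect u w : connect e u w -> rep w = rep u.
Proof.
move=> c_uw; rewrite /rep (eq_pick (connect_sym_eq c_uw)).
by case: pickP => [//|/(_ w)]; rewrite connect0.
Qed.

Lemma component_rep u : component (rep u) = component u.
Proof. by apply: component_connect; rewrite /rep; case: pickP => [//|/(_ u)]; rewrite connect0. Qed.

Definition troot u := (certificate (rep u)).1.1.
Definition tparent u := (certificate (rep u)).1.2.
Definition tpaths u := (certificate (rep u)).2.

Lemma tree_certificate u : [/\ elim_tree e (component u) (troot u) (tparent u),
  width_le e (component u) (tparent u) omega, all (opath e) (tpaths u),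
  congestion_le (tpaths u) omega & witnesses e (component u) (tparent u) (tpaths u)].
Proof. by rewrite -component_rep; apply: certificateP. Qed.

Lemma tree_connect u w : connect e u w ->
  [/\ troot w = troot u, tparent w = tparent u, tpaths w = tpaths u & component w = component u].
Proof.
by move=> c_uw; rewrite /troot /tparent /tpaths (rep_connect c_uw) (component_connect c_uw).
Qed.

Lemma mem_component u : u \in component u.
Proof. by rewrite inE connect0. Qed.

Lemma tparent_tree u : rooted_tree_on (component u) (troot u) (tparent u).
Proof. by case: (tree_certificate u) => -[]. Qed.

Lemma tparent_connect u w : tparent u u = Some w -> connect e u w.
Proof.
by move=> p_u; case: (tparent_tree u) => _ _ /(_ u w (mem_component u) p_u); rewrite inE.
Qed.

Definition node_depth u := tree_depth (tparent u) u.
Definition str_ids u := [seq id a | a <- enum (str e (component u) (tparent u) u :\ u)].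
Definition parent_id u := if tparent u u is Some w then id w else 0.
Definition parent_adjacent u := if tparent u u is Some w then nat_of_bool (e u w) else 1.
Definition routed v := if tparent v v is Some w then ~~ e v w else false.

Definition route_to_parent v s := if tparent v v is Some w then
  e v w || (((v, s) \in tpaths v) && (last v s == w)) else true.

Lemma exists_route_to_parent v : exists s, route_to_parent v s.
Proof.
rewrite /route_to_parent; case p_v: (tparent v v) => [w|]; last by exists [::].
case: (tree_certificate v) => _ _ _ _ /(_ v w (mem_component v) p_v).
case=> [-> | [[x s] P_xs [/= x_v last_s]]]; first by exists [::].
subst x.
by exists s; rewrite P_xs last_s eqxx orbT.
Qed.

Definition rpath v := xchoose (exists_route_to_parent v).

Lemma rpathP v w : tparent v v = Some w -> ~~ e v w ->
  [/\ (v, rpath v) \in tpaths v, last v (rpath v) = w, path e v (rpath v) & uniq (v :: rpath v)].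
Proof.
move=> p_v not_adj; have := xchooseP (exists_route_to_parent v).
rewrite -/(rpath v) /route_to_parent p_v (negbTE not_adj) /= => /andP[P_v /eqP last_v].
by case: (tree_certificate v) => _ _ /allP /(_ _ P_v) /andP[? ?] _ _.
Qed.

Definition next_on_route v u := nth u (v :: rpath v) (index u (v :: rpath v)).+1.
Definition hops_left v u := size (rpath v) - index u (v :: rpath v).

Definition token_at v u :=
  mk_token (id v) (parent_id v) (id (next_on_route v u)) (hops_left v u) (node_depth v) (str_ids v).

Definition carries u v := [&& connect e u v, routed v & u \in belast v (rpath v)].

Definition tokens u := [seq token_at v u | v <- enum (carries u)].

Definition certificate_label u : table :=
  mk_label (id (troot u)) (node_depth u) (parent_id u) (parent_adjacent u) (str_ids u) (tokens u).

Definition prover u : label := encode_table (certificate_label u).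

Lemma parent_ok_tparent u w : tparent u u = Some w ->
  parent_ok (node_depth u) (str_ids u) (id w) (certificate_label w).
Proof.
move=> p_u; have [_ p_w _ component_w] := tree_connect (tparent_connect p_u).
rewrite /parent_ok /ldepth /lstr /= /node_depth p_w.
rewrite (tree_depth_parent (tparent_tree u) (mem_component u) p_u) eqxx /=.
apply/allP => b /mapP[a + ->]; rewrite mem_enum.
move=> /(mem_str_parent (tparent_tree u) (mem_component u) p_u) /orP[/eqP-> | str_a].
  by rewrite eqxx.
by rewrite /str_ids p_w component_w map_f ?mem_enum ?orbT.
Qed.

Lemma size_tokens u : size (tokens u) <= omega.
Proof.
rewrite /tokens size_map -(size_map (fun v : T => (v, rpath v))).
case: (tree_certificate u) => _ _ _ /(_ u) congestion_u _.
apply: leq_trans congestion_u; rewrite /congestion -size_filter.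
have inj : injective (fun v : T => (v, rpath v)) by move=> v1 v2 [].
apply: uniq_leq_size; first by rewrite (map_inj_uniq inj) enum_uniq.
move=> q /mapP[v]; rewrite mem_enum => /and3P[c_uv routed_v u_in] ->.
rewrite mem_filter /= u_in /=; move: routed_v; rewrite /routed.
case p_v: (tparent v v) => [w|//] /(rpathP p_v)[P_v _ _ _].
by have [_ _ <- _] := tree_connect c_uv.
Qed.

Lemma size_str_ids u : size (str_ids u) <= omega.
Proof.
rewrite size_map -cardE; have [_ /(_ u (mem_component u)) width_u _ _ _] := tree_certificate u.
by move: width_u; rewrite (cardsD1 u) /str !inE eqxx.
Qed.

Lemma adj_str_ids u w : e u w -> id w \in str_ids u \/ id u \in str_ids w.
Proof.
move=> euw; have c_uw : connect e u w := connect1 euw.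
have C_w : w \in component u by rewrite inE.
have w_u := simple_graph_neq e_simple euw.
have [_ p_w _ component_w] := tree_connect c_uw.
have [[_ ancestors] _ _ _ _] := tree_certificate u.
case/orP: (ancestors u w (mem_component u) C_w euw) => [c_w | c_u].
  have ewu : e w u by rewrite e_sym.
  by left; apply/map_f; rewrite mem_enum ancestor_mem_str ?mem_component // eq_sym.
right; rewrite /str_ids p_w component_w; apply/map_f.
by rewrite mem_enum ancestor_mem_str // -component_w mem_component.
Qed.


Lemma carries_next u v : carries u v -> exists2 w, tparent v v = Some w &
  [/\ e u (next_on_route v u), 0 < hops_left v u,
      hops_left v u = 1 -> next_on_route v u = w
    & hops_left v u != 1 -> carries (next_on_route v u) v /\
        hops_left v (next_on_route v u) = (hops_left v u).-1].
Proof.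
case/and3P => c_uv; rewrite /routed; case p_v: (tparent v v) => [w|//] not_adj u_in.
exists w => //; have [_ last_w path_v uniq_v] := rpathP p_v not_adj.
rewrite /hops_left /next_on_route; move: (index_belast uniq_v u_in).
have u_in' : u \in v :: rpath v := mem_belast u_in.
set s := rpath v in last_w path_v uniq_v u_in u_in' *; set j := index u (v :: s) => lt_j.
have e_next : e u (nth u (v :: s) j.+1).
  by move/(pathP u): path_v => /(_ j lt_j); rewrite /j nth_index.
split; rewrite ?subn_gt0 //.
  move=> hops1; have -> : j.+1 = size s by lia.
  by rewrite -last_w -[last v s]/(last u (v :: s)) -nth_last.
move=> /eqP hops_ne1; have lt_j1 : j.+1 < size s.
  by rewrite ltn_neqAle lt_j andbT; apply/eqP => E; apply: hops_ne1; rewrite -E subSnn.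
rewrite (index_uniq u (ltnW lt_j1 : j.+1 < size (v :: s)) uniq_v) subnS; split => //.
rewrite /carries /routed p_v not_adj nth_belast // !andbT.
by apply: connect_trans (connect1 _) c_uv; rewrite e_sym.
Qed.

Lemma decoded_prover w : decoded (id w, prover w) = certificate_label w.
Proof. exact: encode_tableK. Qed.

Lemma token_at_ok u v : carries u v -> token_ok (id u) (view e id prover u) (token_at v u).
Proof.
move=> carries_uv; have [w p_v [e_next hops_gt0 hops1 hops_ne1]] := carries_next carries_uv.
apply/andP; split => //; rewrite /token_at.
move: (next_on_route v u) => u' in e_next hops1 hops_ne1 *.
apply/hasP; exists (id u', prover u'); first by apply: view_mem; rewrite e_next orbT.
rewrite /= eqxx (adj_id_neq e_simple id_inj e_next) decoded_prover.
case: ifP => [/eqP /hops1 u'_w | /negbT /hops_ne1].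
  by rewrite /tdst /tdepth /tstr /= /parent_id p_v u'_w eqxx drop0 parent_ok_tparent.
case=> carries_u'v hops_u'; apply/hasP; exists (token_at v u').
  by rewrite /ltokens /= drop0; apply: map_f; rewrite mem_enum.
by rewrite /same_route /thops /= hops_u' !eqxx.
Qed.

Lemma ltokens_certificate_label u : ltokens (certificate_label u) = tokens u.
Proof. exact: drop0. Qed.

Lemma neighbour_connect u w : (w == u) || e u w -> connect e u w.
Proof. by case/orP => [/eqP-> | /connect1]. Qed.

Lemma certificate_root_ok u :
  all (fun a => lroot (decoded a) == lroot (certificate_label u)) (view e id prover u).
Proof.
apply/allP => a /mem_view[w /neighbour_connect c_uw ->].
by rewrite decoded_prover /lroot /=; have [-> _ _ _] := tree_connect c_uw.
Qed.

Lemma certificate_depth0 u : node_depth u = 0 -> id u = id (troot u) /\ str_ids u = [::].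
Proof.
move=> /(tree_depth0 (tparent_tree u) (mem_component u)) u_root; split; first by rewrite -u_root.
rewrite /str_ids (_ : _ :\ _ = set0) ?enum_set0 //; apply/setP => a.
have := sanc_root (tparent_tree u) a; rewrite -u_root /str !inE => ->.
by case: (a =P u).
Qed.

Lemma carries_self u w : tparent u u = Some w -> ~~ e u w -> carries u u.
Proof.
move=> p_u not_adj; rewrite /carries /routed p_u not_adj connect0 /=.
have [_ last_w _ _] := rpathP p_u not_adj.
case: (rpath u) last_w => [/= u_w | x s _]; last by rewrite /= mem_head.
by have := sanc_irr (tparent_tree u) (mem_component u); rewrite /sanc p_u u_w connect0.
Qed.

Lemma certificate_parent_link u : node_depth u != 0 ->
  parent_link_ok (id u) (certificate_label u) (view e id prover u).
Proof.
case p_u: (tparent u u) => [w|]; last by rewrite /node_depth tree_depth_None.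
move=> _; rewrite /parent_link_ok /ladjacent /lparent /= /parent_adjacent /parent_id p_u.
case euw: (e u w) => /=.
  apply/hasP; exists (id w, prover w); first by apply: view_mem; rewrite euw orbT.
  by rewrite /= eqxx (adj_id_neq e_simple id_inj euw) decoded_prover parent_ok_tparent.
apply/hasP; exists (token_at u u).
  rewrite ltokens_certificate_label; apply: map_f; rewrite mem_enum.
  exact: carries_self p_u (negbT euw).
by rewrite /token_at /parent_id p_u /tsrc /tdst /tdepth /tstr /= drop0 !eqxx.
Qed.

Lemma certificate_label_ok u : label_ok omega (id u) (certificate_label u) (view e id prover u).
Proof.
apply/and5P; split; rewrite ?certificate_root_ok ?ltokens_certificate_label ?size_tokens //.
- rewrite /ldepth /lroot /lstr /=.
  by apply/implyP => /eqP /certificate_depth0[-> ->]; rewrite !eqxx.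
- exact: size_str_ids.
apply/and3P; split.
- apply/allP => a /mem_view[w /orP[/eqP-> | euw] ->]; rewrite ?eqxx //= decoded_prover.
  by case: (adj_str_ids euw) => ->; rewrite ?orbT.
- rewrite -[ldepth _]/(node_depth u).
  by case: eqP => [// | /eqP]; apply: certificate_parent_link.
- by apply/allP => t /mapP[v + ->]; rewrite mem_enum; apply: token_at_ok.
Qed.

Lemma prover_accepted u : lvtw_verifier omega (id u) (view e id prover u).
Proof.
apply/hasP; exists (id u, prover u); first by apply: view_mem; rewrite eqxx.
by rewrite /= eqxx decoded_prover certificate_label_ok.
Qed.

Lemma id_le u : id u <= n.
Proof. by case: id_valid => _ /(_ u) /andP[]. Qed.

Lemma node_depth_le u : node_depth u <= n.
Proof. by rewrite -[n]card_ord max_card. Qed.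

Lemma parent_id_le u : parent_id u <= n.
Proof. by rewrite /parent_id; case: (tparent u u) => // w; apply: id_le. Qed.

Lemma hops_left_le v u : carries u v -> hops_left v u <= n.
Proof.
case/and3P => _; rewrite /routed; case p_v: (tparent v v) => [w|//] /(rpathP p_v)[_ _ _ uniq_v] _.
have : size (v :: rpath v) <= #|T|.
  by rewrite cardE; apply: uniq_leq_size uniq_v _ => y; rewrite mem_enum.
by rewrite card_ord /hops_left => /ltnW; apply: leq_trans (leq_subr _ _).
Qed.

Lemma str_ids_le w : all (leq^~ n) (str_ids w).
Proof. by apply/allP => _ /mapP[a _ ->]; apply: id_le. Qed.

Lemma certificate_label_le u : all (all (leq^~ n)) (certificate_label u).
Proof.
have n_gt0 : 0 < n by apply: leq_ltn_trans (ltn_ord u).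
rewrite /= id_le node_depth_le parent_id_le str_ids_le /= andbT; apply/andP; split.
  by rewrite /parent_adjacent; case: (tparent u u) => // w; case: (e u w).
apply/allP => _ /mapP[v + ->]; rewrite mem_enum => carries_uv.
by rewrite /= !id_le parent_id_le hops_left_le // node_depth_le str_ids_le.
Qed.

Lemma size_prover u :
  size (prover u) <= (omega + 2) * (8 * (omega + 5) + 2) * (trunc_log 2 n).+1.
Proof.
apply: size_encode_table.
- by rewrite /= addn2 !ltnS size_tokens.
- move=> l; rewrite !inE => /or3P[/eqP-> | /eqP-> | /mapP[v _ ->]] /=.
  + by rewrite addnC.
  + by rewrite (leq_trans (size_str_ids u)) ?leq_addr.
  + by rewrite addnC !ltnS size_str_ids.
- by move=> l x /(allP (certificate_label_le u)) /allP; apply.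
Qed.

End Completeness.

Theorem proposition6 (omega : nat) :
  exists V : nat -> seq (nat * label) -> bool,
    log_size_PLS (fun n (e : rel 'I_n) => lv_treewidth_le e omega) V.
Proof.
exists (lvtw_verifier omega), ((omega + 2) * (8 * (omega + 5) + 2)); split.
- move=> n e id e_simple id_valid lvtw; exists (prover id e_simple lvtw); split => v.
    exact: size_prover.
  exact: prover_accepted.
- move=> n e id e_simple id_valid not_lvtw phi.
  case: (boolP [forall v, lvtw_verifier omega (id v) (view e id phi v)]) => [/forallP accepted|].
    by case: not_lvtw; apply: lvtw_sound accepted.
  by rewrite negb_forall => /existsP[v /negbTE rejected]; exists v.
Qed.
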